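(* There exists $n_0$ such that for every $n\ge n_0$, \[\mathrm{ex}(n,T_1,C_4)=\mathcal{N}(T_1,F(n))=\begin{cases}\binom{n}{2}-\frac{3(n-1)}{2} & \text{if } n \text{ is odd},\\[2pt] \binom{n}{2}-2n+3 & \text{if } n \text{ is even}.\end{cases}\]
   Context: $T_1$ (the paw) is the graph on $4$ vertices consisting of a triangle and one further vertex joined to exactly one vertex of the triangle. $C_4$ is the cycle on $4$ vertices. $F(n)$ is the friendship graph on $n$ vertices: it has a vertex $v$ of degree $n-1$, and on the remaining $n-1$ vertices a matching with $\lfloor (n-1)/2\rfloor$ edges (and no other edges). For graphs $H,G$, $\mathcal{N}(H,G)$ is the number of subgraphs of $G$ isomorphic to $H$, and $\mathrm{ex}(n,H,F)$ is the maximum of $\mathcal{N}(H,G)$ over $F$-free graphs $G$ on $n$ vertices. *)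

From mathcomp Require Import all_boot all_order.
Set Implicit Arguments. Unset Strict Implicit. Unset Printing Implicit Defensive.

Definition simple_graph (T : finType) (E : {set {set T}}) : bool :=
  [forall e in E, #|e| == 2].

(* N(H, G): number of subgraphs (V', E') of G (vertex set V', edge set E' with
   E' a subset of E(G)) isomorphic to H, where H has vertex set 'I_k and edge
   set EH.  (V', E') is isomorphic to H iff there is a bijection
   f : 'I_k -> V' mapping EH onto E'. *)
Definition num_copies (k : nat) (EH : {set {set 'I_k}})
    (T : finType) (EG : {set {set T}}) : nat :=
  #|[set p : {set T} * {set {set T}} |
      (p.2 \subset EG) &&
      [exists f : {ffun 'I_k -> T},
         [&& injectiveb f, (f @: [set: 'I_k]) == p.1 &
             ([set f @: e | e : {set 'I_k} in EH] == p.2)]]]|.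

Definition ex_gen (n : nat) (k : nat) (EH : {set {set 'I_k}})
    (l : nat) (EF : {set {set 'I_l}}) : nat :=
  \max_(E : {set {set 'I_n}} | simple_graph E && (num_copies EF E == 0))
     num_copies EH E.

Definition paw : {set {set 'I_4}} :=
  [set [set (inord 0 : 'I_4); inord 1]; [set (inord 1 : 'I_4); inord 2]; [set (inord 0 : 'I_4); inord 2];
       [set (inord 0 : 'I_4); inord 3]].

Definition C4 : {set {set 'I_4}} :=
  [set [set (inord 0 : 'I_4); inord 1]; [set (inord 1 : 'I_4); inord 2]; [set (inord 2 : 'I_4); inord 3];
       [set (inord 3 : 'I_4); inord 0]].

(* Friendship graph F(n) on 'I_n: vertex 0 joined to all others, plus the
   matching {1,2},{3,4},... with floor((n-1)/2) edges. *)
Definition friendship (n : nat) : {set {set 'I_n}} :=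
  [set [set i; j] | i in 'I_n, j in 'I_n &
     ((val i == 0) && (val j != 0)) || (odd (val i) && (val j == (val i).+1))].

From mathcomp Require Import all_boot all_order.
From mathcomp Require Import zify.
Set Implicit Arguments. Unset Strict Implicit. Unset Printing Implicit Defensive.

(* In a C4-free graph on n vertices two distinct vertices have at most one
   common neighbour.  Let X count the tuples (a, b, c, d) made of a triangle abc
   and a pendant edge ad, and Y the ordered triangles.  Every paw gives two such
   tuples, and as d sees no other vertex of the triangle, rotating the triangle
   gives 3 X <= (n - 3) Y.  The ordered pairs (b, d) and (b, c) read off tuples
   and triangles are pairwise distinct pairs of distinct vertices, so
   X + Y <= n (n - 1).  When n is even, a fixed-point-free involution on the
   2-paths starting at a vertex w shows that some pair near w is missed, which
   yields n further pairs and X + Y <= n (n - 2).  Hence there are at most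
   (n - 3) floor((n - 1) / 2) paws, and the friendship graph has exactly that
   many: a triangle through the centre together with any of the n - 3 other
   vertices. *)

Lemma set2_eq (T : finType) (a b c d : T) :
  [set a; b] = [set c; d] -> (a = c /\ b = d) \/ (a = d /\ b = c).
Proof.
move=> eq_ab_cd.
have : a \in [set c; d] by rewrite -eq_ab_cd set21.
have : b \in [set c; d] by rewrite -eq_ab_cd set22.
have : c \in [set a; b] by rewrite eq_ab_cd set21.
have : d \in [set a; b] by rewrite eq_ab_cd set22.
by rewrite !inE => /pred2P[] ? /pred2P[] ? /pred2P[] ? /pred2P[] ?; subst; auto.
Qed.

Lemma card_dep_pairs (T1 T2 : finType) (A : {set T1}) (B : T1 -> {set T2}) :
  #|[set p : T1 * T2 | (p.1 \in A) && (p.2 \in B p.1)]| = \sum_(x in A) #|B x|.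
Proof.
rewrite -sum1_card (eq_bigl (fun p : T1 * T2 => (p.1 \in A) && (p.2 \in B p.1))).
  rewrite -(pair_big_dep (fun x => x \in A) (fun x y => y \in B x) (fun _ _ => 1)).
  by apply: eq_bigr => x _; rewrite sum1_card.
by move=> p; rewrite inE.
Qed.

Lemma even_card_involution (T : finType) (A : {set T}) (f : T -> T) :
  {in A, forall x, f x \in A} -> {in A, involutive f} -> {in A, forall x, f x != x} ->
  ~~ odd #|A|.
Proof.
move=> fA fK f_neq.
pose B := [set x | enum_rank x < enum_rank (f x)].
have f_AB : f @: (A :&: B) = A :\: B.
  apply/setP => y; apply/imsetP/idP => [[x]|].
    rewrite !inE => /andP[xA lt] ->; by rewrite fA // fK // andbT -leqNgt ltnW.
  rewrite !inE -leqNgt => /andP[le_y yA]; exists (f y); last by rewrite fK.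
  have : enum_rank (f y) != enum_rank y by rewrite (inj_eq enum_rank_inj) f_neq.
  by rewrite !inE fA // fK // ltn_neqAle le_y andbT.
have card_f_AB : #|f @: (A :&: B)| = #|A :&: B|.
  apply: card_in_imset => x y; rewrite !inE => /andP[xA _] /andP[yA _] fxy.
  by rewrite -(fK x xA) fxy fK.
by rewrite -(cardsID B A) -f_AB card_f_AB addnn odd_double.
Qed.

Definition i0 : 'I_4 := inord 0.
Definition i1 : 'I_4 := inord 1.
Definition i2 : 'I_4 := inord 2.
Definition i3 : 'I_4 := inord 3.

Lemma setT_I4 : [set: 'I_4] = [set i0; i1; i2; i3].
Proof. by apply/setP => -[[|[|[|[|i]]]] Hi]; rewrite !inE // -!val_eqE /= !inordK. Qed.

Section FourVertices.
Variable T : finType.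

Definition ffun4 (a b c d : T) : {ffun 'I_4 -> T} :=
  [ffun i : 'I_4 => nth a [:: a; b; c; d] i].

Lemma ffun4E a b c d :
  [/\ ffun4 a b c d i0 = a, ffun4 a b c d i1 = b, ffun4 a b c d i2 = c
    & ffun4 a b c d i3 = d].
Proof. by rewrite !ffunE /i0 /i1 /i2 /i3 !inordK. Qed.

Lemma ffun4_inj a b c d :
  a != b -> a != c -> a != d -> b != c -> b != d -> c != d ->
  injectiveb (ffun4 a b c d).
Proof.
move=> ab ac ad bc bd cd; apply/injectiveP.
move=> [[|[|[|[|i]]]] Hi] [[|[|[|[|j]]]] Hj] //; rewrite !ffunE /= => eq_ij;
  try (by apply: val_inj); subst; by rewrite ?eqxx in ab ac ad bc bd cd.
Qed.

Lemma injective4_neq (f : {ffun 'I_4 -> T}) : injectiveb f ->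
  [&& f i0 != f i1, f i0 != f i2, f i0 != f i3, f i1 != f i2, f i1 != f i3
    & f i2 != f i3].
Proof. by move/injectiveP => f_inj; rewrite !(inj_eq f_inj) -!val_eqE /= !inordK. Qed.

Lemma imset_setT_I4 (f : 'I_4 -> T) : f @: [set: 'I_4] = [set f i0; f i1; f i2; f i3].
Proof. by rewrite setT_I4 !imsetU !imset_set1. Qed.

Lemma imset_paw (f : 'I_4 -> T) :
  [set f @: e | e : {set 'I_4} in paw] =
  [set [set f i0; f i1]; [set f i1; f i2]; [set f i0; f i2]; [set f i0; f i3]].
Proof. by rewrite /paw !imsetU !imset_set1 !imsetU !imset_set1. Qed.

Lemma imset_C4 (f : 'I_4 -> T) :
  [set f @: e | e : {set 'I_4} in C4] =
  [set [set f i0; f i1]; [set f i1; f i2]; [set f i2; f i3]; [set f i3; f i0]].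
Proof. by rewrite /C4 !imsetU !imset_set1 !imsetU !imset_set1. Qed.

End FourVertices.

(** * The extremal number *)

Definition paw_bound n := (n - 3) * (n.-1 %/ 2).

Lemma paw_boundE n : 0 < n ->
  (if odd n then 'C(n, 2) - 3 * (n.-1 %/ 2) else 'C(n, 2) + 3 - 2 * n) = paw_bound n.
Proof.
rewrite /paw_bound bin2 -divn2 -(odd_double_half n).
case: (odd n); move: n./2 => m; rewrite /= ?odd_double -!muln2 !add0n => m0.
- rewrite mulnA !mulnK // -mulnBl; congr (_ * _); lia.
- have -> : (m * 2).-1 %/ 2 = m.-1 by lia.
  rewrite mulnAC mulnK //; nia.
Qed.

Lemma paw_bound_of_counts N P X Y : 2 * P <= X -> 3 * X <= Y * (N - 3) ->
  X + Y + (if odd N then 0 else N) <= N * N.-1 -> P <= paw_bound N.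
Proof.
move=> le_PX le_XY le_pairs.
have {}le_pairs : X + Y <= N * (2 * (N.-1 %/ 2)).
  suff eqN : N * N.-1 = N * (2 * (N.-1 %/ 2)) + (if odd N then 0 else N) by lia.
  case: N {le_XY le_pairs} => //= n; rewrite divn2.
  by have := odd_double_half n; case: (odd n) => /= nE; nia.
have : N * X <= N * ((N - 3) * (2 * (N.-1 %/ 2))).
  apply: leq_trans (_ : (N - 3) * (X + Y) <= _); first nia.
  by rewrite mulnCA leq_mul2l le_pairs orbT.
rewrite /paw_bound; case: N le_XY le_pairs => [|N] _ le_pairs; first by lia.
rewrite leq_pmul2l //; nia.
Qed.

(** * Paws and triangles in C4-free graphs *)

Section Graph.
Variables (T : finType) (E : {set {set T}}).

Definition adj (x y : T) := [set x; y] \in E.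

Lemma adjC x y : adj x y = adj y x.
Proof. by rewrite /adj setUC. Qed.

Definition C4free := forall x y z z', x != y ->
  adj x z -> adj y z -> adj x z' -> adj y z' -> z = z'.

Hypothesis simpleE : simple_graph E.

Lemma adj_neq x y : adj x y -> x != y.
Proof. by move/(forall_inP simpleE); rewrite cards2; case: (x != y). Qed.

Lemma C4freeP : num_copies C4 E = 0 <-> C4free.
Proof.
split=> [noC4 x y z z' xy xz yz xz' yz'|C4freeE].
  apply/eqP/negPn/negP => zz'; move/eqP: noC4; apply/negP.
  rewrite /num_copies cards_eq0; apply/set0Pn; pose f := ffun4 x z y z'.
  exists (f @: [set: 'I_4], [set f @: e | e : {set 'I_4} in C4]); rewrite inE /=.
  apply/andP; split.
    rewrite imset_C4; case: (ffun4E x z y z') => -> -> -> ->.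
    apply/subsetP => e; rewrite !inE => /orP[/orP[/orP[]|]|] /eqP ->;
      by rewrite -/(adj _ _) // adjC.
  apply/existsP; exists f; rewrite !eqxx !andbT ffun4_inj // ?adj_neq //.
  by rewrite adjC.
apply/eqP; rewrite /num_copies cards_eq0; apply/eqP/setP => -[V' E'].
rewrite inE in_set0 /=.
apply/negbTE/negP => /andP[sub /existsP[f /and3P[/injective4_neq f_neq _ /eqP fE]]].
have edge x y : [set x; y] \in [set f @: e | e : {set 'I_4} in C4] -> adj x y.
  by rewrite fE => /(subsetP sub).
move: f_neq fE; rewrite imset_C4 => /and3P[_ f02 /and4P[_ _ f13 _]] fE.
case/eqP: f13; apply: (C4freeE (f i0) (f i2)) => //; [| rewrite adjC | rewrite adjC |];
  by apply: edge; rewrite imset_C4 !inE eqxx ?orbT.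
Qed.

Definition paw_tuples := [set q : T * T * T * T | let: (a, b, c, d) := q in
  [&& adj a b, adj a c, adj b c, adj a d, d != b & d != c]].

Definition sorted_paw_tuples :=
  [set q in paw_tuples | let: (_, b, c, _) := q in enum_rank b < enum_rank c].

Definition paw_subgraph (q : T * T * T * T) : {set T} * {set {set T}} :=
  let: (a, b, c, d) := q in
  ([set a; b; c; d], [set [set a; b]; [set b; c]; [set a; c]; [set a; d]]).

Lemma paw_subgraph_swap a b c d : paw_subgraph (a, c, b, d) = paw_subgraph (a, b, c, d).
Proof.
congr (_, _); first by rewrite (setUAC [set a]).
by apply/setP => e; rewrite !inE (setUC [set c]); do ![case: (_ == _)].
Qed.

Lemma num_copies_paw_le : num_copies paw E <= #|sorted_paw_tuples|.
Proof.
apply: leq_trans (leq_imset_card paw_subgraph _); apply: subset_leq_card.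
apply/subsetP => -[V' E']; rewrite inE /=.
case/andP=> sub /existsP[f /and3P[f_inj /eqP fV /eqP fE]].
rewrite imset_setT_I4 in fV; rewrite imset_paw in fE.
have edge x y : [set x; y] \in E' -> adj x y by move/(subsetP sub).
have e01 : adj (f i0) (f i1) by apply: edge; rewrite -fE !inE eqxx.
have e12 : adj (f i1) (f i2) by apply: edge; rewrite -fE !inE eqxx !orbT.
have e02 : adj (f i0) (f i2) by apply: edge; rewrite -fE !inE eqxx !orbT.
have e03 : adj (f i0) (f i3) by apply: edge; rewrite -fE !inE eqxx !orbT.
have /and3P[_ _ /and4P[_ _ f13 f23]] := injective4_neq f_inj.
have copyE : (V', E') = paw_subgraph (f i0, f i1, f i2, f i3) by rewrite -fV -fE.
have : enum_rank (f i1) != enum_rank (f i2).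
  by rewrite (inj_eq enum_rank_inj) (inj_eq (injectiveP _ f_inj)) -val_eqE /= !inordK.
rewrite neq_ltn => /orP[lt12 | lt21]; apply/imsetP.
  exists (f i0, f i1, f i2, f i3) => //.
  by rewrite !inE /= e01 e02 e12 e03 !(eq_sym (f i3)) f13 f23.
exists (f i0, f i2, f i1, f i3); last by rewrite paw_subgraph_swap.
by rewrite !inE /= e01 e02 adjC e12 e03 !(eq_sym (f i3)) f13 f23.
Qed.

Lemma card_sorted_paw_tuples : 2 * #|sorted_paw_tuples| <= #|paw_tuples|.
Proof.
pose swap (q : T * T * T * T) := let: (a, b, c, d) := q in (a, c, b, d).
have swap_inj : injective swap by move=> [[[? ?] ?] ?] [[[? ?] ?] ?] [-> -> -> ->].
have disj : [disjoint sorted_paw_tuples & swap @: sorted_paw_tuples].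
  apply/pred0P => q; rewrite /= !inE; apply/negP => /andP[/andP[_ lt]].
  case/imsetP=> q'; rewrite !inE => /andP[_]; case: q' => [[[a b] c] d] lt' eq_q.
  by move: lt; rewrite eq_q /= ltnNge ltnW.
have sub : sorted_paw_tuples :|: swap @: sorted_paw_tuples \subset paw_tuples.
  apply/subsetP => q; rewrite !inE => /orP[/andP[-> _] //|].
  case/imsetP=> -[[[a b] c] d]; rewrite !inE /=.
  move=> /andP[/and4P[ab ac bc /and3P[ad db dc]] _] ->.
  by rewrite ac ab adjC bc ad dc db.
move: (subset_leq_card sub); rewrite cardsU (disjoint_setI0 disj) cards0 subn0.
by rewrite card_imset // addnn -mul2n.
Qed.

Definition apex (q : T * T * T * T) := let: (a, _, _, _) := q in a.

Lemma paw_subgraph_inj_at a :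
  {in [set q in sorted_paw_tuples | apex q == a] &, injective paw_subgraph}.
Proof.
move=> [[[a1 b] c] d] [[[a2 b'] c'] d'] /[!inE] /= /andP[/andP[qP lt] /eqP ea1].
move=> /andP[/andP[_ lt'] /eqP ea2]; subst a1 a2; case=> _ eqE.
move: qP => /and4P[ab ac _ /and3P[ad db dc]].
have a_bc : a \notin [set b; c] by rewrite !inE negb_or (adj_neq ab) (adj_neq ac).
have d_bc : d \notin [set b; c] by rewrite !inE negb_or db dc.
have da : d != a by rewrite eq_sym (adj_neq ad).
have edge e : e \in [set [set a; b]; [set b; c]; [set a; c]; [set a; d]] ->
    e \in [set [set a; b']; [set b'; c']; [set a; c']; [set a; d']] by rewrite eqE.
have ebc : [set b; c] = [set b'; c'].
  move: (edge [set b; c]); rewrite !inE eqxx orbT => /(_ isT).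
  by case/orP=> [/orP[/orP[] | ] | ] /eqP // bcE; move: a_bc; rewrite bcE set21.
have [eb ec] : b = b' /\ c = c'.
  case: (set2_eq ebc) => // -[eb ec]; subst b' c'.
  by move: lt lt' => /ltn_trans/[apply]; rewrite ltnn.
subst b' c'; congr (_, _, _, _).
move: (edge [set a; d]); rewrite !inE eqxx !orbT => /(_ isT).
case/orP=> [/orP[/orP[] | ] | ] /eqP adE.
- case: (set2_eq adE) => -[_ eq_d]; last by rewrite eq_d eqxx in da.
  by move: d_bc; rewrite eq_d set21.
- by move: a_bc; rewrite -adE set21.
- case: (set2_eq adE) => -[_ eq_d]; last by rewrite eq_d eqxx in da.
  by move: d_bc; rewrite eq_d set22.
- by case: (set2_eq adE) => -[_ eq_d] //; rewrite eq_d eqxx in da.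
Qed.

Lemma card_apex_paw_tuples_le a :
  #|[set q in sorted_paw_tuples | apex q == a]| <= num_copies paw E.
Proof.
rewrite -(card_in_imset (@paw_subgraph_inj_at a)).
apply/subset_leq_card/subsetP => _ /imsetP[[[[a' b] c] d] /[!inE] /andP[/andP[qP _] _] ->].
move: qP => /and4P[ab ac bc /and3P[ad db dc]] /=; apply/andP; split.
  by apply/subsetP => e; rewrite !inE => /orP[/orP[/orP[] | ] | ] /eqP ->.
apply/existsP; exists (ffun4 a' b c d).
rewrite imset_setT_I4 imset_paw; case: (ffun4E a' b c d) => -> -> -> ->.
have nab := adj_neq ab; have nac := adj_neq ac; have nad := adj_neq ad.
have nbc := adj_neq bc.
by rewrite !eqxx !andbT ffun4_inj // eq_sym.
Qed.

Definition triangles := [set t : T * T * T | let: (a, b, c) := t in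
  [&& adj a b, adj a c & adj b c]].

Hypothesis C4freeE : C4free.

Lemma paw_tuple_pendant a b c d :
  (a, b, c, d) \in paw_tuples -> ~~ adj b d && ~~ adj c d.
Proof.
rewrite inE => /and4P[ab ac bc /and3P[ad db dc]].
apply/andP; split; apply/negP => xd.
  by move: dc; rewrite (C4freeE (adj_neq ab) ac bc ad xd) eqxx.
by move: db; rewrite (C4freeE (adj_neq ac) ab _ ad xd) ?eqxx // adjC.
Qed.

(* In a paw tuple d is adjacent to a but not to b or c (paw_tuple_pendant), so
   d determines which rotation was applied and rotations never collide. *)
Definition rotate_paw_tuple (x : T * T * T * T * 'I_3) : T * T * T * T :=
  let: (a, b, c, d, r) := x in
  match val r with 0 => (a, b, c, d) | 1 => (b, c, a, d) | _ => (c, a, b, d) end.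

Lemma card_paw_tuples_le : 3 * #|paw_tuples| <= #|triangles| * (#|T| - 3).
Proof.
pose outside (t : T * T * T) := let: (a, b, c) := t in ~: [set a; b; c].
pose pointed := [set p : T * T * T * T | (p.1 \in triangles) && (p.2 \in outside p.1)].
have -> : #|triangles| * (#|T| - 3) = #|pointed|.
  rewrite card_dep_pairs -sum_nat_const; apply: eq_bigr => -[[a b] c].
  rewrite inE => /and3P[/adj_neq ab /adj_neq ac /adj_neq bc].
  have card_abc : #|[set a; b; c]| = 3.
    by rewrite -setUA cardsU1 cards2 !inE bc negb_or ab ac.
  by rewrite -(cardsC [set a; b; c]) card_abc addKn.
have -> : 3 * #|paw_tuples| = #|setX paw_tuples [set: 'I_3]|.
  by rewrite cardsX cardsT card_ord mulnC.
rewrite -(card_in_imset (f := rotate_paw_tuple)).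
  apply/subset_leq_card/subsetP => _ /imsetP[[[[[a b] c] d] r] /setXP[qP _] ->].
  have /andP[bd cd] := paw_tuple_pendant qP.
  move: qP; rewrite !inE /= => /and4P[ab ac bc /and3P[ad db dc]].
  have da : d != a by rewrite eq_sym adj_neq.
  case: r => -[|[|[|//]]] _ /=; rewrite !inE !negb_or /=;
    by rewrite ?ab ?ac ?bc ?da ?db ?dc ?(adjC b a) ?(adjC c a) ?(adjC c b) ?ab ?ac ?bc.
move=> [[[[a b] c] d] r] [[[[a' b'] c'] d'] r'] /setXP[qP _] /setXP[qP' _].
have /andP[bd cd] := paw_tuple_pendant qP; have /andP[bd' cd'] := paw_tuple_pendant qP'.
move: qP qP'; rewrite !inE /= => /and4P[_ _ _ /andP[ad _]] /and4P[_ _ _ /andP[ad' _]].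
case: r => -[|[|[|//]]] ?; case: r' => -[|[|[|//]]] ? /= [*]; subst;
  by [congr (_, _, _, _, _); apply: val_inj | rewrite ?ad ?ad' in bd cd bd' cd'].
Qed.

(** * Common neighbours and parity *)

Definition has_common_nbr x y := [exists z, adj x z && adj y z].

Definition common_nbr x y := odflt x [pick z | adj x z && adj y z].

Lemma has_common_nbrC x y : has_common_nbr x y = has_common_nbr y x.
Proof. by apply/existsP/existsP => -[z]; exists z; rewrite andbC. Qed.

Lemma has_common_nbrI x y z : adj x z -> adj y z -> has_common_nbr x y.
Proof. by move=> xz yz; apply/existsP; exists z; rewrite xz yz. Qed.

Lemma common_nbrP x y :
  has_common_nbr x y -> adj x (common_nbr x y) && adj y (common_nbr x y).
Proof.
by case/existsP=> z xyz; rewrite /common_nbr; case: pickP => [//|/(_ z)]; rewrite xyz.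
Qed.

Lemma common_nbr_eq x y z : x != y -> adj x z -> adj y z -> common_nbr x y = z.
Proof.
move=> xy xz yz; have /andP[xc yc] := common_nbrP (has_common_nbrI xz yz).
exact: C4freeE xy xc yc xz yz.
Qed.

Section Parity.
Variable w : T.
Hypothesis common_nbr_w : forall u, u != w -> has_common_nbr w u.
Hypothesis common_nbr_path :
  forall x u, adj w x -> adj x u -> u != w -> has_common_nbr x u.

Definition paths2 := [set p : T * T | [&& adj w p.1, adj p.1 p.2 & p.2 != w]].

Lemma card_paths2 : #|paths2| = #|T|.-1.
Proof.
rewrite -(cardsC1 w) -(card_in_imset (f := snd)).
  apply: eq_card => u; rewrite !inE; apply/imsetP/idP => [[[x u']]|uw].
    by rewrite inE => /and3P[_ _ ?] ->.
  have /andP[wx ux] := common_nbrP (common_nbr_w uw).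
  by exists (common_nbr w u, u); rewrite // inE /= wx adjC ux.
move=> [x u] [x' u'] /[!inE] /= /and3P[wx xu uw] /and3P[wx' xu' _] /= eq_u; subst u'.
have wu : w != u by rewrite eq_sym.
by rewrite (C4freeE wu wx _ wx' (_ : adj u x')) // adjC.
Qed.

Definition flip_path2 (p : T * T) : T * T :=
  let: (x, u) := p in
  if u == common_nbr x w then (u, x) else (x, common_nbr x u).

Lemma flip_path2P p : p \in paths2 ->
  [/\ flip_path2 p \in paths2, flip_path2 (flip_path2 p) = p & flip_path2 p != p].
Proof.
case: p => x u; rewrite inE /= => /and3P[wx xu uw].
have xw : x != w by rewrite eq_sym adj_neq.
have := common_nbr_w xw; rewrite has_common_nbrC => /common_nbrP/andP[xz wz].
set z := common_nbr x w in xz wz *.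
have /andP[xv uv] := common_nbrP (common_nbr_path wx xu uw).
set v := common_nbr x u in xv uv *.
rewrite /flip_path2; case: eqP => [uz | /eqP uz].
  subst u; have zx : adj z x by rewrite adjC.
  rewrite inE /= wz zx xw (common_nbr_eq uw zx wx) eqxx; split=> //.
  by apply/negP => /eqP[xz_eq]; move: (adj_neq xz); rewrite xz_eq eqxx.
have vw : v != w.
  by apply: contraNneq uz => vw; rewrite /z (common_nbr_eq xw xu) // adjC -vw.
have vz : v != z.
  apply: contraNneq (adj_neq xv) => vz.
  have wu : w != u by rewrite eq_sym.
  by rewrite (C4freeE wu wx (_ : adj u x) _ uv) ?vz // adjC.
rewrite inE /= wx xv vw (negbTE vz) (common_nbr_eq (adj_neq xv) xu) 1?adjC //.
by split=> //; apply/negP => /eqP[/eqP]; rewrite eq_sym (negbTE (adj_neq uv)).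
Qed.

Lemma odd_card_of_common_nbrs : odd #|T|.
Proof.
have card_gt0 : 0 < #|T| by apply/card_gt0P; exists w.
rewrite -(prednK card_gt0) /= -card_paths2.
by apply: (even_card_involution (f := flip_path2)) => p /flip_path2P[].
Qed.

End Parity.

(* When #|T| is even one of the two picks succeeds (spare_pairP), so the
   default (w, w) is never reached. *)
Definition spare_pair w : T * T :=
  if [pick u | (u != w) && ~~ has_common_nbr w u] is Some u then (w, u)
  else if [pick p : T * T |
             [&& adj p.1 w, adj p.1 p.2, p.2 != w & ~~ has_common_nbr p.1 p.2]]
    is Some p then (p.2, w) else (w, w).

Lemma spare_pairP w : ~~ odd #|T| ->
  (exists2 u, spare_pair w = (w, u) & (u != w) && ~~ has_common_nbr w u) \/
  (exists x y, [/\ spare_pair w = (y, w), adj x w, adj x y, y != w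
                 & ~~ has_common_nbr x y]).
Proof.
move=> evenT; rewrite /spare_pair.
case: pickP => [u uP | no_u]; first by left; exists u.
case: pickP => [[x y] /and4P[xw xy yw nxy] | no_xy]; first by right; exists x, y.
case/negP: evenT; apply: (odd_card_of_common_nbrs (w := w)).
  by move=> u uw; move: (no_u u); rewrite uw /= => /negbFE.
by move=> x u wx xu uw; move: (no_xy (x, u)); rewrite /= adjC wx xu uw /= => /negbFE.
Qed.

Definition paw_pair (q : T * T * T * T) := let: (_, b, _, d) := q in (b, d).

Definition triangle_pair (t : T * T * T) := let: (_, b, c) := t in (b, c).

Lemma card_paw_pairs : #|paw_pair @: paw_tuples| = #|paw_tuples|.
Proof.
apply: card_in_imset => -[[[a b] c] d] [[[a' b'] c'] d'] /[!inE] /=.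
move=> /and4P[ab ac bc /and3P[ad db _]] /and4P[ab' ac' bc' /and3P[ad' _ _]] [eb ed].
subst b' d'; have bd : b != d by rewrite eq_sym.
have ea : a = a' by apply: (C4freeE bd); rewrite // adjC.
subst a'; suff -> : c = c' by [].
by apply: (C4freeE (adj_neq ab)); rewrite // adjC.
Qed.

Lemma card_triangle_pairs : #|triangle_pair @: triangles| = #|triangles|.
Proof.
apply: card_in_imset => -[[a b] c] [[a' b'] c'] /[!inE] /=.
move=> /and3P[ab ac bc] /and3P[ab' ac' _] [eb ec]; subst b' c'.
suff -> : a = a' by [].
by apply: (C4freeE (adj_neq bc)); rewrite // adjC.
Qed.

Lemma disjoint_paw_triangle_pairs :
  [disjoint paw_pair @: paw_tuples & triangle_pair @: triangles].
Proof.
apply/pred0P => p /=; apply/negP => /andP[/imsetP[[[[a b] c] d] qP ->]].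
case/imsetP=> -[[a' b'] c']; rewrite inE => /and3P[ab' ad' bd'] [eb ed]; subst b' c'.
move: qP; rewrite inE => /and4P[ab ac bc /and3P[ad db dc]].
have bd : b != d by rewrite eq_sym.
have ea : a = a' by apply: (C4freeE bd); rewrite // adjC.
subst a'; move: dc; suff -> : d = c by rewrite eqxx.
exact: (C4freeE (adj_neq ab)).
Qed.

Section EvenOrder.
Hypothesis evenT : ~~ odd #|T|.

Lemma spare_pair_inj : injective spare_pair.
Proof.
move=> w w'.
case: (spare_pairP w evenT) => [[u -> /andP[_ nwu]] | [x [y [-> xw xy _ _]]]];
case: (spare_pairP w' evenT) => [[u' -> /andP[_ nwu']] | [x' [y' [-> xw' xy' _ _]]]].
- by case.
- case=> wy uw; move: nwu; rewrite wy uw (has_common_nbrI (z := x')) // adjC //.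
- case=> yw wu; move: nwu'; rewrite -yw -wu (has_common_nbrI (z := x)) // adjC //.
- by case.
Qed.

Lemma spare_pair_fresh w : [&& (spare_pair w).1 != (spare_pair w).2,
  spare_pair w \notin paw_pair @: paw_tuples &
  spare_pair w \notin triangle_pair @: triangles].
Proof.
case: (spare_pairP w evenT) => [[u -> /andP[uw nwu]] | [x [y [-> xw xy yw nxy]]]] /=.
  rewrite eq_sym uw /=; apply/andP; split; apply: contra nwu.
    case/imsetP=> -[[[a b] c] d]; rewrite inE => /and4P[ab _ _ /andP[ad _]] [-> ->].
    by rewrite (has_common_nbrI (z := a)) // adjC.
  case/imsetP=> -[[a b] c]; rewrite inE => /and3P[ab ac _] [-> ->].
  by rewrite (has_common_nbrI (z := a)) // adjC.
rewrite yw /=; apply/andP; split; apply: contra nxy.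
  case/imsetP=> -[[[a b] c] d]; rewrite inE => /and4P[ab ac bc /andP[ad _]] [eb ed].
  subst b d; have -> : x = a by apply: (C4freeE yw); rewrite adjC.
  by rewrite (has_common_nbrI ac).
case/imsetP=> -[[a b] c]; rewrite inE => /and3P[ab ac bc] [eb ec]; subst b c.
have -> : x = a by apply: (C4freeE yw); rewrite adjC.
by rewrite (has_common_nbrI ac).
Qed.

End EvenOrder.

Lemma card_paw_tuples_triangles :
  #|paw_tuples| + #|triangles| + (if odd #|T| then 0 else #|T|) <= #|T| * #|T|.-1.
Proof.
pose offdiag := [set p : T * T | (p.1 \in [set: T]) && (p.2 \in [set~ p.1])].
have -> : #|T| * #|T|.-1 = #|offdiag|.
  rewrite (card_dep_pairs [set: T] (fun x => [set~ x])).
  by rewrite (eq_bigr _ (fun x _ => cardsC1 x)) sum_nat_const cardsT.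
pose spare := if odd #|T| then set0 else spare_pair @: [set: T].
have -> : (if odd #|T| then 0 else #|T|) = #|spare|.
  rewrite /spare; case: ifPn => [_ | evenT]; first by rewrite cards0.
  by rewrite card_imset ?cardsT //; apply: spare_pair_inj.
set A := paw_pair @: paw_tuples; set B := triangle_pair @: triangles.
have disj_spare : [disjoint A :|: B & spare].
  rewrite /spare; case: ifPn => [_ | evenT]; first by rewrite disjoint_sym -setI_eq0 set0I.
  apply/pred0P => p /=; apply/negP => /andP[AB /imsetP[w _ pw]].
  have /and3P[_ nA nB] := spare_pair_fresh evenT w.
  by move: AB; rewrite inE pw (negPf nA) (negPf nB).
rewrite -card_paw_pairs -card_triangle_pairs.
have /eqP<- : #|A :|: B| == #|A| + #|B|.
  by rewrite (leq_card_setU A B).2 disjoint_paw_triangle_pairs.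
have /eqP<- : #|A :|: B :|: spare| == #|A :|: B| + #|spare|.
  by rewrite (leq_card_setU _ _).2.
apply/subset_leq_card/subsetP => p; rewrite !inE => /orP[/orP[] | ].
- by case/imsetP=> -[[[a b] c] d]; rewrite inE => /and4P[_ _ _ /and3P[_ db _]] ->.
- by case/imsetP=> -[[a b] c]; rewrite inE => /and3P[_ _ bc] ->; rewrite /= eq_sym adj_neq.
- rewrite /spare; case: ifPn => [_ | evenT]; first by rewrite inE.
  by case/imsetP=> w _ ->; have /and3P[] := spare_pair_fresh evenT w; rewrite eq_sym.
Qed.

Lemma num_copies_paw_le_bound : num_copies paw E <= paw_bound #|T|.
Proof.
apply: (paw_bound_of_counts _ card_paw_tuples_le card_paw_tuples_triangles).
exact: leq_trans (leq_mul (leqnn 2) num_copies_paw_le) card_sorted_paw_tuples.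
Qed.

End Graph.

(** * The friendship graph *)

Section Friendship.
Variable n : nat.

Definition friend (i j : 'I_n) :=
  ((val i == 0) && (val j != 0)) || (odd i && (val j == i.+1)).

Lemma friend_neq i j : friend i j -> i != j.
Proof.
case/orP=> [/andP[/eqP i0 j0] | /andP[_ /eqP ji]]; apply/eqP => eq_ij.
  by move: j0; rewrite -eq_ij i0.
by move: ji; rewrite eq_ij /=; lia.
Qed.

Lemma adj_friendship x y : adj (friendship n) x y = friend x y || friend y x.
Proof.
apply/imset2P/orP => [[i j _] | [xy | yx]].
- by rewrite inE => ij /set2_eq[[-> ->] | [-> ->]]; [left | right].
- by exists x y; rewrite ?inE.
- by exists y x; rewrite ?inE // setUC.
Qed.

Lemma simple_friendship : simple_graph (friendship n).
Proof.
apply/forall_inP => e /imset2P[i j _]; rewrite inE => ij ->.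
by rewrite cards2 friend_neq.
Qed.

Lemma friendship_nonhub_nbr x y z : val x != 0 -> val y != 0 -> val z != 0 ->
  adj (friendship n) x y -> adj (friendship n) x z -> y = z.
Proof.
move=> x0 y0 z0; rewrite !adj_friendship /friend (negbTE x0) (negbTE y0) (negbTE z0) /=.
case/orP=> [/andP[ox /eqP ey] | /andP[oy /eqP ex]];
  case/orP=> [/andP[ox' /eqP ez] | /andP[oz /eqP ex']]; apply: val_inj => /=.
- by rewrite ey ez.
- by move: ox; rewrite ex' /= oz.
- by move: ox'; rewrite ex /= oy.
- by move: ex ex'; lia.
Qed.

Lemma C4free_friendship : C4free (friendship n).
Proof.
have hub_uniq (u v : 'I_n) : val u = 0 -> val v = 0 -> u = v.
  by move=> u0 v0; apply: val_inj; rewrite /= u0 v0.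
have hub_nbr (u v : 'I_n) : val u = 0 -> adj (friendship n) u v -> val v != 0.
  move=> u0 /(adj_neq simple_friendship); apply: contraNneq => v0.
  by rewrite (hub_uniq _ _ u0 v0).
move=> x y z z' xy xz yz xz' yz'.
wlog z0 : z z' xz yz xz' yz' / val z = 0.
  move=> hwlog; case: (eqVneq (val z) 0) => [|z_nz]; first exact: hwlog.
  case: (eqVneq (val z') 0) => [z'0 | z'_nz]; first by symmetry; apply: hwlog.
  case: (eqVneq (val x) 0) => [x0 | x_nz]; last exact: friendship_nonhub_nbr xz xz'.
  have y_nz : val y != 0.
    by apply: contraNneq xy => y0; rewrite (hub_uniq _ _ x0 y0).
  exact: friendship_nonhub_nbr yz yz'.
have x_nz : val x != 0 by apply: hub_nbr z0 _; rewrite adjC.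
have y_nz : val y != 0 by apply: hub_nbr z0 _; rewrite adjC.
case: (eqVneq z z') => // zz'.
have z'_nz : val z' != 0.
  by apply: contraNneq zz' => z'0; rewrite (hub_uniq _ _ z0 z'0).
by case/eqP: xy; apply: (friendship_nonhub_nbr z'_nz); rewrite // adjC.
Qed.

Hypothesis n_gt0 : 0 < n.

Definition hub : 'I_n := Ordinal n_gt0.

Lemma blade_lt (k : 'I_(n.-1 %/ 2)) : k.*2.+2 < n.
Proof. by have := ltn_ord k; lia. Qed.

Definition blade1 k : 'I_n := Ordinal (ltnW (blade_lt k)).
Definition blade2 k : 'I_n := Ordinal (blade_lt k).

Lemma paw_bound_le_num_copies_friendship : paw_bound n <= num_copies paw (friendship n).
Proof.
apply: leq_trans (card_apex_paw_tuples_le simple_friendship hub).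
pose blade k := [set hub; blade1 k; blade2 k].
pose D := [set p : 'I_(n.-1 %/ 2) * 'I_n | (p.1 \in [set: _]) && (p.2 \in ~: blade p.1)].
have -> : paw_bound n = #|D|.
  rewrite (card_dep_pairs [set: _] (fun k => ~: blade k)).
  rewrite (eq_bigr (fun _ => n - 3)) ?sum_nat_const ?cardsT ?card_ord 1?mulnC // => k _.
  have card_blade : #|blade k| = 3.
    by rewrite /blade -setUA cardsU1 cards2 !inE -!val_eqE /= (ltn_eqF (ltnSn _)).
  by rewrite -[n in RHS]card_ord -(cardsC (blade k)) card_blade addKn.
pose paw_at (p : 'I_(n.-1 %/ 2) * 'I_n) := (hub, blade1 p.1, blade2 p.1, p.2).
rewrite -(card_in_imset (f := paw_at)); last first.
  move=> [k d] [k' d'] _ _ [eq_blade1 _ ->]; congr (_, _); apply: val_inj.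
  by move: eq_blade1 => /=; lia.
apply/subset_leq_card/subsetP => _ /imsetP[[k d] /[!inE] /= dP ->].
move: dP; rewrite !negb_or => /andP[/andP[d_hub d1] d2].
have d0 : val d != 0 by rewrite -[0]/(val hub) val_eqE.
rewrite /= !adj_friendship /friend /= odd_double eqxx d0 d1 d2 !enum_rank_ord /=.
by rewrite ltnSn eqxx.
Qed.

End Friendship.

Theorem theorem3p11 :
  exists n0 : nat, forall n : nat, n0 <= n ->
    ex_gen n paw C4 = num_copies paw (friendship n) /\
    num_copies paw (friendship n) =
      (if odd n then 'C(n, 2) - 3 * (n.-1 %/ 2) else 'C(n, 2) + 3 - 2 * n).
Proof.
exists 1 => n n_gt0.
have upper (E : {set {set 'I_n}}) :
    simple_graph E && (num_copies C4 E == 0) -> num_copies paw E <= paw_bound n.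
  case/andP=> simpleE /eqP /(C4freeP simpleE) C4freeE.
  by have := num_copies_paw_le_bound simpleE C4freeE; rewrite card_ord.
have friendshipP :
    simple_graph (friendship n) && (num_copies C4 (friendship n) == 0).
  rewrite simple_friendship; apply/eqP/(C4freeP (simple_friendship n)).
  exact: C4free_friendship.
have copiesF : num_copies paw (friendship n) = paw_bound n.
  by apply/eqP; rewrite eqn_leq upper // paw_bound_le_num_copies_friendship.
split; last by rewrite copiesF paw_boundE.
apply/eqP; rewrite eqn_leq; apply/andP; split.
  by apply/bigmax_leqP => E /upper; rewrite copiesF.
exact: (leq_bigmax_cond (F := fun E => num_copies paw E) _ friendshipP).
Qed.
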